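(* Let $\mathbb{K}$ be an algebraically closed field, let $A$ be a $\mathbb{K}$-algebra which is an integral domain, and let $\delta$ be a non-negative subdegree on $A$ with minimal presentation $\delta=\max_{1\le i\le N}\delta_i$. Let $X:=\operatorname{Spec}A$, viewed as an open subset of $\bar X^\delta:=\operatorname{Proj}A^\delta$. Then the number of irreducible components of $X_\infty:=\bar X^\delta\setminus X$ is $N$ if none of the $\delta_i$ is the zero function, and $N-1$ otherwise.
   Context: A degree-like function on a $\mathbb{K}$-algebra $A$ is a map $\delta: A\setminus\{0\}\to\mathbb{Z}\cup\{-\infty\}$ such that $\delta(c)=0$ for nonzero constants $c\in\mathbb{K}$; $\delta(f+g)\le\max\{\delta(f),\delta(g)\}$, with strict inequality implying $\delta(f)=\delta(g)$; and $\delta(fg)\le\delta(f)+\delta(g)$. It is a semidegree if $\delta(fg)=\delta(f)+\delta(g)$, and a subdegree if it is the pointwise maximum of semidegrees $\delta_1,\dots,\delta_N$; the presentation is minimal if for each $i$ there is $f$ with $\delta_i(f)>\delta_j(f)$ for all $j\neq i$. With $F_d:=\{f\in A:\delta(f)\le d\}$, $A^\delta:=\bigoplus_{d\ge0}F_d\cong\sum_{d\ge0}F_dt^d$, with $(f)_d$ the copy of $f$ in degree $d$. The open embedding $X=\operatorname{Spec}A\hookrightarrow\operatorname{Proj}A^\delta$ is $\mathfrak p\mapsto\bigoplus_{d\ge0}(\mathfrak p\cap F_d)$, whose image is the complement of $V((1)_1)$. *)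

From HB Require Import structures.
From mathcomp Require Import all_boot all_order all_algebra.
Set Implicit Arguments. Unset Strict Implicit. Unset Printing Implicit Defensive.
Import Order.TTheory GRing.Theory Num.Theory.
Local Open Scope ring_scope.

(* Z ∪ {-oo}: [None] is -oo, [Some n] is the integer n. *)
Definition Zinf := option int.
Definition Zle (a b : Zinf) : bool :=
  match a, b with
  | None, _ => true
  | Some _, None => false
  | Some x, Some y => (x <= y)%R
  end.
Definition Zlt (a b : Zinf) : bool := Zle a b && (a != b).
Definition Zmax (a b : Zinf) : Zinf := if Zle a b then b else a.
Definition Zadd (a b : Zinf) : Zinf :=
  match a, b with Some x, Some y => Some (x + y)%R | _, _ => None end.

Section DegreeLike.
Variables (K : fieldType) (A : comAlgType K).

(* Only the values on A \ {0} are meaningful. *)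
Definition degree_like (d : A -> Zinf) : Prop :=
  [/\ (forall c : K, c != 0 -> d (c%:A) = Some 0%R),
      (forall f g : A, f != 0 -> g != 0 -> f + g != 0 ->
         Zle (d (f + g)) (Zmax (d f) (d g)) /\
         (Zlt (d (f + g)) (Zmax (d f) (d g)) -> d f = d g)) &
      (forall f g : A, f != 0 -> g != 0 -> f * g != 0 ->
         Zle (d (f * g)) (Zadd (d f) (d g)))].

Definition semidegree (d : A -> Zinf) : Prop :=
  degree_like d /\
  (forall f g : A, f != 0 -> g != 0 -> f * g != 0 -> d (f * g) = Zadd (d f) (d g)).

Definition subdegree_presentation (d : A -> Zinf) (N : nat) (ds : 'I_N -> A -> Zinf) : Prop :=
  (forall i, semidegree (ds i)) /\
  (forall f : A, f != 0 -> d f = \big[Zmax/None]_(i < N) ds i f).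

Definition minimal_presentation (N : nat) (ds : 'I_N -> A -> Zinf) : Prop :=
  forall i, exists f : A, f != 0 /\ forall j, j != i -> Zlt (ds j f) (ds i f).

Definition nonneg_fun (d : A -> Zinf) : Prop := forall f : A, f != 0 -> Zle (Some 0%R) (d f).

Definition is_zero_fun (d : A -> Zinf) : Prop := forall f : A, f != 0 -> d f = Some 0%R.

Definition Fd (d : A -> Zinf) (n : nat) (f : A) : bool := (f == 0) || Zle (d f) (Some (n%:Z)).

(* A^delta = sum_n F_n t^n, realised inside A[t] = {poly A} *)
Definition in_Adelta (d : A -> Zinf) (p : {poly A}) : Prop := forall n, Fd d n p`_n.

(* points of Proj A^delta: homogeneous prime ideals of A^delta not containing
   the irrelevant ideal A^delta_+ *)
Definition is_Proj_point (d : A -> Zinf) (P : {poly A} -> Prop) : Prop :=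
  [/\ (forall p, P p -> in_Adelta d p),
      P 0,
      (forall p q, P p -> P q -> P (p + q)),
      (forall p q, P p -> in_Adelta d q -> P (q * p)) &
      ~ P 1] /\
  [/\ (forall p q, in_Adelta d p -> in_Adelta d q -> P (p * q) -> P p \/ P q),
      (forall p, P p -> forall n, P ((p`_n)%:P * 'X^n)) &
      (exists p, [/\ in_Adelta d p, p`_0 = 0 & ~ P p])].

Definition Proj_closed (d : A -> Zinf) (C : ({poly A} -> Prop) -> Prop) : Prop :=
  exists I : {poly A} -> Prop, (forall p, I p -> in_Adelta d p) /\
    forall P, C P <-> (is_Proj_point d P /\ forall p, I p -> P p).

(* X_oo = Proj A^delta \ X = V((1)_1), where (1)_1 = t = 'X *)
Definition X_infty (d : A -> Zinf) (P : {poly A} -> Prop) : Prop :=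
  is_Proj_point d P /\ P 'X.

Definition irreducible_in_Xinf (d : A -> Zinf) (Z : ({poly A} -> Prop) -> Prop) : Prop :=
  [/\ (forall P, Z P -> X_infty d P),
      (exists P, Z P) &
      (forall C1 C2, Proj_closed d C1 -> Proj_closed d C2 ->
         (forall P, Z P -> C1 P \/ C2 P) ->
         (forall P, Z P -> C1 P) \/ (forall P, Z P -> C2 P))].

Definition irreducible_component_Xinf (d : A -> Zinf) (Z : ({poly A} -> Prop) -> Prop) : Prop :=
  irreducible_in_Xinf d Z /\
  (forall Z', irreducible_in_Xinf d Z' -> (forall P, Z P -> Z' P) -> forall P, Z' P -> Z P).

Definition Xinf_has_n_components (d : A -> Zinf) (M : nat) : Prop :=
  exists Zs : 'I_M -> ({poly A} -> Prop) -> Prop,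
    [/\ (forall i, irreducible_component_Xinf d (Zs i)),
        (forall i j, (forall P, Zs i P <-> Zs j P) -> i = j) &
        (forall Z, irreducible_component_Xinf d Z -> exists i, forall P, Z P <-> Zs i P)].

End DegreeLike.

(* The components of X_oo are the closures of the homogeneous primes
     p_i = { sum_n (f_n)_n in A^delta : delta_i(f_n) < n for all n }
   for the non-zero delta_i.  Since delta_i is a semidegree, the top coefficients where
   delta_i(f_n) = n multiply to such a coefficient of a product, so p_i is prime; it contains
   t = (1)_1, and it misses the irrelevant ideal exactly when delta_i is not zero, using
   minimality to produce some f with delta(f) = delta_i(f) > 0.  Every point P of X_oo contains
   some p_i: otherwise choose (a_i)_(n_i) in p_i \ P; their product (a)_n has delta(a) < n,
   hence equals (a)_(n-1) * t and lies in P, contradicting primality.  Minimality also makes the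
   p_i pairwise incomparable and allows at most one delta_i to be zero. *)

From HB Require Import structures.
From mathcomp Require Import all_boot all_order all_algebra zify.
From Stdlib Require Import Classical IndefiniteDescription.
Import GRing.Theory Num.Theory.
Set Implicit Arguments. Unset Strict Implicit. Unset Printing Implicit Defensive.
Local Open Scope ring_scope.

Lemma Zle_refl a : Zle a a.
Proof. by case: a => [a|] //=; lia. Qed.

Lemma Zle_trans a b c : Zle a b -> Zle b c -> Zle a c.
Proof. by case: a => [a|]; case: b => [b|]; case: c => [c|] //=; lia. Qed.

Lemma Zle_total a b : Zle a b || Zle b a.
Proof. by case: a => [a|]; case: b => [b|] //=; lia. Qed.

Lemma Zle_anti a b : Zle a b -> Zle b a -> a = b.
Proof. by case: a => [a|]; case: b => [b|] //= h1 h2; congr Some; lia. Qed.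

Lemma ZltNge a b : Zlt a b = ~~ Zle b a.
Proof.
rewrite /Zlt; case: a => [a|]; case: b => [b|] //=.
rewrite (inj_eq (@Some_inj _)) /=; apply/idP/idP.
  by case/andP => h1 /eqP h2; apply/negP => h3; apply: h2; lia.
by move=> h; apply/andP; split; [lia | apply/eqP; lia].
Qed.

Lemma Zlt_irr a : Zlt a a = false.
Proof. by rewrite ZltNge Zle_refl. Qed.

Lemma Zlt_le a b : Zlt a b -> Zle a b.
Proof. by case/andP. Qed.

Lemma Zle_lt_trans a b c : Zle a b -> Zlt b c -> Zlt a c.
Proof.
rewrite !ZltNge => h1; apply: contra => h3; exact: Zle_trans h3 h1.
Qed.

Lemma Zlt_le_trans a b c : Zlt a b -> Zle b c -> Zlt a c.
Proof.
rewrite !ZltNge => h1 h2; apply: contra h1 => h3; exact: Zle_trans h2 h3.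
Qed.

Lemma Zmax_le a b c : Zle (Zmax a b) c = Zle a c && Zle b c.
Proof.
rewrite /Zmax; case: ifP; case: a => [a|]; case: b => [b|]; case: c => [c|] //= h;
  apply/idP/idP; try (case/andP => ? ?); try (move=> ?; apply/andP; split); lia.
Qed.

Lemma Zle_maxl a b : Zle a (Zmax a b).
Proof. by rewrite /Zmax; case: ifP => // _; exact: Zle_refl. Qed.

Lemma Zle_maxr a b : Zle b (Zmax a b).
Proof.
rewrite /Zmax; case: ifP => [_|/negbT]; first exact: Zle_refl.
by have := Zle_total a b; case: (Zle a b).
Qed.

Lemma Zmax_lt a b c : Zlt (Zmax a b) c = Zlt a c && Zlt b c.
Proof.
apply/idP/andP => [h|[ha hb]]; last by rewrite /Zmax; case: ifP.
by split; apply: Zle_lt_trans h; [exact: Zle_maxl | exact: Zle_maxr].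
Qed.

Lemma Zadd_le a a' b b' : Zle a a' -> Zle b b' -> Zle (Zadd a b) (Zadd a' b').
Proof. by case: a => [a|]; case: b => [b|]; case: a' => [a'|]; case: b' => [b'|] //=; lia. Qed.

Lemma Zadd_ltl a b x y : Zlt a (Some x) -> Zle b (Some y) -> Zlt (Zadd a b) (Some (x + y)).
Proof. by rewrite !ZltNge; case: a => [a|]; case: b => [b|] //=; lia. Qed.

Lemma Zadd_ltr a b x y : Zle a (Some x) -> Zlt b (Some y) -> Zlt (Zadd a b) (Some (x + y)).
Proof. by rewrite !ZltNge; case: a => [a|]; case: b => [b|] //=; lia. Qed.

Lemma Zadd0l a : Zadd (Some 0) a = a.
Proof. by case: a => [a|] //=; rewrite add0r. Qed.

Lemma Zadd0r a : Zadd a (Some 0) = a.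
Proof. by case: a => [a|] //=; rewrite addr0. Qed.

Lemma bigZmax_le (I : Type) (r : seq I) (F : I -> Zinf) v :
  Zle (\big[Zmax/None]_(i <- r) F i) v = all (fun i => Zle (F i) v) r.
Proof. by elim: r => [|x r IH]; rewrite ?big_nil // big_cons Zmax_le IH. Qed.

Lemma bigZmax_lt (I : Type) (r : seq I) (F : I -> Zinf) x :
  Zlt (\big[Zmax/None]_(i <- r) F i) (Some x) = all (fun i => Zlt (F i) (Some x)) r.
Proof. by elim: r => [|y r IH]; rewrite ?big_nil // big_cons Zmax_lt IH. Qed.

Definition homog (R : nzRingType) (a : R) (n : nat) : {poly R} := a%:P * 'X^n.

Lemma coef_homog (R : nzRingType) (a : R) n m : (homog a n)`_m = if m == n then a else 0.
Proof. by rewrite /homog coefCM coefXn; case: (m == n); rewrite ?mulr1 ?mulr0. Qed.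

Lemma poly_homog_sum (R : nzRingType) (p : {poly R}) : p = \sum_(n < size p) homog p`_n n.
Proof. by rewrite -[p in LHS]coefK poly_def; apply: eq_bigr => i _; rewrite /homog mul_polyC. Qed.

Lemma homogSX (R : nzRingType) (a : R) n : homog a n.+1 = homog a n * 'X.
Proof. by rewrite /homog -mulrA -exprSr. Qed.

Lemma prod_homog (R : comNzRingType) (I : Type) (r : seq I) (a : I -> R) (n : I -> nat) :
  \prod_(k <- r) homog (a k) (n k) = homog (\prod_(k <- r) a k) (\sum_(k <- r) n k).
Proof. by rewrite /homog big_split /= rmorph_prod prodrXr. Qed.

Section DegreeLikeTheory.
Variables (K : fieldType) (A : comAlgType K).
Hypothesis A_idom : forall f g : A, f * g = 0 -> (f == 0) || (g == 0).

Lemma mul_neq0_dom (f g : A) : f != 0 -> g != 0 -> f * g != 0.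
Proof. by move=> hf hg; apply/negP => /eqP /A_idom; rewrite (negbTE hf) (negbTE hg). Qed.

(* [d] extended by [d 0 = -oo]: the degree-like axioms then hold without side conditions. *)
Definition tdeg (d : A -> Zinf) (f : A) : Zinf := if f == 0 then None else d f.

Lemma tdeg0 d : tdeg d 0 = None.
Proof. by rewrite /tdeg eqxx. Qed.

Lemma tdegE d f : f != 0 -> tdeg d f = d f.
Proof. by rewrite /tdeg => /negbTE ->. Qed.

Section OneDegree.
Variable d : A -> Zinf.
Hypothesis d_degree_like : degree_like d.

Lemma tdeg_scalar c : c != 0 -> tdeg d c%:A = Some 0.
Proof.
move=> c0; rewrite tdegE ?scaler_eq0 ?negb_or ?c0 ?oner_neq0 //.
by case: d_degree_like => h _ _; apply: h.
Qed.

Lemma tdeg1 : tdeg d 1 = Some 0.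
Proof. by rewrite -(scale1r (1 : A)) tdeg_scalar ?oner_neq0. Qed.

Lemma tdegM_le f g : Zle (tdeg d (f * g)) (Zadd (tdeg d f) (tdeg d g)).
Proof.
have [->|hf] := eqVneq f 0; first by rewrite mul0r tdeg0.
have [->|hg] := eqVneq g 0; first by rewrite mulr0 tdeg0.
rewrite !tdegE ?mul_neq0_dom //.
by case: d_degree_like => _ _; apply; rewrite ?mul_neq0_dom.
Qed.

Lemma tdegN f : tdeg d (- f) = tdeg d f.
Proof.
have tdegN_le g : Zle (tdeg d (- g)) (tdeg d g).
  have := tdegM_le (-1 : K)%:A g.
  by rewrite tdeg_scalar ?oppr_eq0 ?oner_neq0 // Zadd0l scaleN1r mulN1r.
apply: Zle_anti; first exact: tdegN_le.
by rewrite -{1}[f]opprK; exact: tdegN_le.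
Qed.

Lemma tdegD_le f g : Zle (tdeg d (f + g)) (Zmax (tdeg d f) (tdeg d g)).
Proof.
have [->|hf] := eqVneq f 0; first by rewrite add0r tdeg0 Zle_maxr.
have [->|hg] := eqVneq g 0; first by rewrite addr0 tdeg0 Zle_maxl.
have [->|hfg] := eqVneq (f + g) 0; first by rewrite tdeg0.
by rewrite !tdegE //; case: d_degree_like => _ h _; case: (h f g hf hg hfg).
Qed.

Lemma tdegD_dominant f g : Zlt (tdeg d f) (tdeg d g) -> tdeg d (f + g) = tdeg d g.
Proof.
have [->|hf] := eqVneq f 0; first by rewrite add0r.
have [->|hg] := eqVneq g 0; first by rewrite tdeg0 ZltNge.
have [hfg|hfg] := eqVneq (f + g) 0.
  by rewrite -[g](addKr f) hfg addr0 tdegN Zlt_irr.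
rewrite !tdegE // => hlt; case: d_degree_like => _ /(_ f g hf hg hfg) [hle hstrict] _.
have hmax : Zmax (d f) (d g) = d g by rewrite /Zmax (Zlt_le hlt).
rewrite hmax in hle hstrict; apply: Zle_anti => //.
case: (boolP (Zle (d g) (d (f + g)))) => // hgt.
by move: hlt; rewrite hstrict ?Zlt_irr // ZltNge.
Qed.

Lemma tdeg_sum_le (I : Type) (r : seq I) (P : pred I) (F : I -> A) v :
  (forall i, P i -> Zle (tdeg d (F i)) v) -> Zle (tdeg d (\sum_(i <- r | P i) F i)) v.
Proof.
move=> h; apply: (big_ind (fun x => Zle (tdeg d x) v)) => //; first by rewrite tdeg0.
by move=> x y hx hy; apply: Zle_trans (tdegD_le x y) _; rewrite Zmax_le hx hy.
Qed.

Lemma tdeg_sum_lt (I : Type) (r : seq I) (P : pred I) (F : I -> A) x :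
  (forall i, P i -> Zlt (tdeg d (F i)) (Some x)) ->
  Zlt (tdeg d (\sum_(i <- r | P i) F i)) (Some x).
Proof.
move=> h; apply: (big_ind (fun y => Zlt (tdeg d y) (Some x))) => //; first by rewrite tdeg0.
by move=> y z hy hz; apply: Zle_lt_trans (tdegD_le y z) _; rewrite Zmax_lt hy hz.
Qed.

Lemma tdeg_prod_le (I : Type) (r : seq I) (P : pred I) (F : I -> A) (n : I -> nat) :
  (forall i, P i -> Zle (tdeg d (F i)) (Some (n i)%:Z)) ->
  Zle (tdeg d (\prod_(i <- r | P i) F i)) (Some (\sum_(i <- r | P i) n i)%:Z).
Proof.
move=> h; apply: (big_ind2 (fun x (m : nat) => Zle (tdeg d x) (Some m%:Z))) => //.
  by rewrite tdeg1.
move=> x1 m1 x2 m2 h1 h2; apply: Zle_trans (tdegM_le x1 x2) _.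
by rewrite PoszD; exact: Zadd_le h1 h2.
Qed.

End OneDegree.

Lemma tdegM d : semidegree d -> forall f g, tdeg d (f * g) = Zadd (tdeg d f) (tdeg d g).
Proof.
move=> [_ dM] f g.
have [->|hf] := eqVneq f 0; first by rewrite mul0r tdeg0.
have [->|hg] := eqVneq g 0; first by rewrite mulr0 !tdeg0; case: (tdeg d f).
by rewrite !tdegE ?mul_neq0_dom //; apply: dM; rewrite ?mul_neq0_dom.
Qed.

Lemma tdeg_exp_le d f x k : semidegree d ->
  Zle (tdeg d f) (Some x) -> Zle (tdeg d (f ^+ k)) (Some (x *+ k)).
Proof.
move=> hd hf; elim: k => [|k IH]; first by rewrite expr0 tdeg1 //; case: hd.
by rewrite exprS tdegM // mulrS; exact: (Zadd_le (a' := Some x) (b' := Some (x *+ k))).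
Qed.

Lemma tdeg_exp d f x k : semidegree d -> tdeg d f = Some x -> tdeg d (f ^+ k) = Some (x *+ k).
Proof.
move=> hd hf; elim: k => [|k IH]; first by rewrite expr0 tdeg1 //; case: hd.
by rewrite exprS tdegM // IH hf mulrS.
Qed.

End DegreeLikeTheory.

Section Adelta.
Variables (K : fieldType) (A : comAlgType K).
Hypothesis A_idom : forall f g : A, f * g = 0 -> (f == 0) || (g == 0).
Variable d : A -> Zinf.
Hypothesis d_degree_like : degree_like d.

Definition in_Ad (p : {poly A}) : Prop := forall n, Zle (tdeg d p`_n) (Some n%:Z).

Lemma in_AdeltaP p : in_Adelta d p <-> in_Ad p.
Proof. by rewrite /in_Adelta /in_Ad /Fd /tdeg; split => h n; move: (h n); case: (p`_n == 0). Qed.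

Lemma in_Ad_homog a n : Zle (tdeg d a) (Some n%:Z) -> in_Ad (homog a n).
Proof. by move=> h m; rewrite coef_homog; case: eqP => [->|_] //; rewrite tdeg0. Qed.

Lemma in_Ad0 : in_Ad 0.
Proof. by move=> n; rewrite coef0 tdeg0. Qed.

Lemma in_Ad1 : in_Ad 1.
Proof. by move=> [|n]; rewrite coef1 /= ?tdeg1 ?tdeg0. Qed.

Lemma in_AdX : in_Ad 'X.
Proof. by move=> n; rewrite coefX; case: eqP => [->|_]; rewrite ?tdeg1 ?tdeg0. Qed.

Lemma in_AdD p q : in_Ad p -> in_Ad q -> in_Ad (p + q).
Proof.
move=> hp hq n; rewrite coefD; apply: Zle_trans (tdegD_le d_degree_like _ _) _.
by rewrite Zmax_le hp hq.
Qed.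

Lemma in_AdM p q : in_Ad p -> in_Ad q -> in_Ad (p * q).
Proof.
move=> hp hq n; rewrite coefM; apply: (tdeg_sum_le d_degree_like) => j _.
apply: Zle_trans (tdegM_le A_idom d_degree_like _ _) _.
rewrite -[n in Some n%:Z](subnKC (ltnSE (ltn_ord j))) PoszD.
exact: Zadd_le (hp j) (hq (n - j)%N).
Qed.

Lemma in_Ad_prod (I : Type) (r : seq I) (F : I -> {poly A}) :
  (forall i, in_Ad (F i)) -> in_Ad (\prod_(i <- r) F i).
Proof. by move=> h; apply: big_ind => //; [exact: in_Ad1 | exact: in_AdM]. Qed.

Definition Vset (I : {poly A} -> Prop) (P : {poly A} -> Prop) : Prop :=
  is_Proj_point d P /\ forall p, I p -> P p.

Lemma Proj_point_homog P (p : {poly A}) : is_Proj_point d P -> (forall n, P (homog p`_n n)) -> P p.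
Proof.
by move=> [[_ P0 PD _ _] _] h; rewrite (poly_homog_sum p); apply: big_ind => // n _.
Qed.

Lemma Proj_point_prod P (I : Type) (r : seq I) (F : I -> {poly A}) :
  is_Proj_point d P -> (forall k, in_Ad (F k)) -> P (\prod_(k <- r) F k) ->
  exists k, P (F k).
Proof.
move=> [[_ _ _ _ P1] [Pprime _ _]] hF; elim: r => [|x r IH]; first by rewrite big_nil.
rewrite big_cons => hP.
have [|Pr] := Pprime _ _ ((in_AdeltaP _).2 (hF x)) ((in_AdeltaP _).2 (in_Ad_prod _ hF)) hP.
  by exists x.
exact: IH.
Qed.

Lemma Proj_closed_Vset I : (forall p, I p -> in_Ad p) -> Proj_closed d (Vset I).
Proof. by move=> hI; exists I; split => // p /hI /in_AdeltaP. Qed.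

Lemma Proj_closed_ext C C' : Proj_closed d C -> (forall P, C P <-> C' P) -> Proj_closed d C'.
Proof. by move=> [I [hI hC]] he; exists I; split => // P; rewrite -he. Qed.

Lemma Proj_closed0 : Proj_closed d (fun _ => False).
Proof.
apply: (Proj_closed_ext (Proj_closed_Vset (I := eq 1) _)) => [_ <-|P]; first exact: in_Ad1.
by split=> // [[[[_ _ _ _ P1] _] /(_ 1 erefl)]].
Qed.

(* V(I) u V(J) = V(IJ), by primality of the points. *)
Lemma Proj_closedU C1 C2 : Proj_closed d C1 -> Proj_closed d C2 ->
  Proj_closed d (fun P => C1 P \/ C2 P).
Proof.
move=> [I1 [hI1 hC1]] [I2 [hI2 hC2]].
exists (fun r => exists p q, [/\ I1 p, I2 q & r = p * q]); split.
  move=> _ [p [q [hp hq ->]]]; apply/in_AdeltaP.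
  by apply: in_AdM; apply/in_AdeltaP; [exact: hI1 | exact: hI2].
move=> P; split.
  case=> [/hC1 | /hC2] [HP h]; split => // _ [p [q [hp hq ->]]];
    case: (HP) => [[_ _ _ Pideal _] _].
    by rewrite mulrC; apply: Pideal; [exact: h | exact: hI2].
  by apply: Pideal; [exact: h | exact: hI1].
move=> [HP h].
case: (classic (forall p, I1 p -> P p)) => [h1|]; first by left; apply/hC1.
move=> /not_all_ex_not [p /(imply_to_and (I1 p)) [hp1 hp2]].
case: (classic (forall q, I2 q -> P q)) => [h2|]; first by right; apply/hC2.
move=> /not_all_ex_not [q /(imply_to_and (I2 q)) [hq1 hq2]].
case: HP => _ [Pprime _ _].
have /Pprime : P (p * q) by apply: h; exists p, q.
by case=> //; [exact: hI1 | exact: hI2].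
Qed.

Lemma Proj_closed_bigcup (I : eqType) (C : I -> ({poly A} -> Prop) -> Prop) (s : seq I) :
  (forall k, Proj_closed d (C k)) -> Proj_closed d (fun P => exists2 k, k \in s & C k P).
Proof.
move=> hC; elim: s => [|k s IH].
  by apply: (Proj_closed_ext Proj_closed0) => P; split => // [[]].
apply: (Proj_closed_ext (Proj_closedU (hC k) IH)) => P; split.
  by case=> [h|[j hj h]]; [exists k; rewrite ?mem_head | exists j; rewrite // in_cons hj orbT].
by move=> [j]; rewrite in_cons => /orP [/eqP ->|hj] h; [left | right; exists j].
Qed.

Lemma irreducible_sub_bigcup (I : eqType) (C : I -> ({poly A} -> Prop) -> Prop) (s : seq I) Z :
  irreducible_in_Xinf d Z -> (forall k, Proj_closed d (C k)) ->
  (forall P, Z P -> exists2 k, k \in s & C k P) -> exists k, forall P, Z P -> C k P.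
Proof.
move=> [_ [P0 ZP0] Zirr] hC; elim: s => [|k s IH] hcov; first by case: (hcov _ ZP0).
have hcov' : forall P, Z P -> C k P \/ exists2 j, j \in s & C j P.
  move=> P /hcov [j]; rewrite in_cons => /orP [/eqP ->|hj] h; first by left.
  by right; exists j.
by case: (Zirr _ _ (hC k) (Proj_closed_bigcup s hC) hcov') => [|/IH]; first exists k.
Qed.

(* The closure of a point at infinity is irreducible, having that point as generic point. *)
Lemma Vset_point_irreducible P0 :
  is_Proj_point d P0 -> P0 'X -> irreducible_in_Xinf d (Vset P0).
Proof.
move=> P0pt P0X; split; first by move=> P [HP h]; split => //; exact: h.
  by exists P0.
move=> C1 C2 [I1 [_ hC1]] [I2 [_ hC2]] hcov.
case: (hcov P0) => [//|/hC1 [_ h]|/hC2 [_ h]]; [left|right] => P [HP hP].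
  by apply/hC1; split => // p /h /hP.
by apply/hC2; split => // p /h /hP.
Qed.

End Adelta.

Section Subdegree.
Variables (K : fieldType) (A : comAlgType K).
Hypothesis A_idom : forall f g : A, f * g = 0 -> (f == 0) || (g == 0).
Variables (delta : A -> Zinf) (N : nat) (ds : 'I_N -> A -> Zinf).
Hypotheses (delta_degree_like : degree_like delta) (delta_nneg : nonneg_fun delta)
  (delta_pres : subdegree_presentation delta ds) (ds_minimal : minimal_presentation ds).

Local Notation Dl := (tdeg delta).
Local Notation D i := (tdeg (ds i)).
Local Notation in_Ad := (in_Ad delta).

Lemma ds_semidegree i : semidegree (ds i).
Proof. by case: delta_pres. Qed.

Lemma ds_degree_like i : degree_like (ds i).
Proof. by case: (ds_semidegree i). Qed.

Local Notation tdeg_dsM := (tdegM A_idom (ds_semidegree _)).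

Lemma tdeg_subdegree f : Dl f = \big[Zmax/None]_(i < N) D i f.
Proof.
have [->|f0] := eqVneq f 0.
  by rewrite tdeg0; elim/big_ind: _ => // [x y <- <-|i _]; rewrite ?tdeg0.
by rewrite tdegE //; case: delta_pres => _ -> //; apply: eq_bigr => i _; rewrite tdegE.
Qed.

Lemma tdeg_subdegree_le f v : Zle (Dl f) v <-> forall i, Zle (D i f) v.
Proof. by rewrite tdeg_subdegree bigZmax_le; split => [/allP h i | h]; [exact: h | apply/allP]. Qed.

Lemma tdeg_subdegree_lt f x : Zlt (Dl f) (Some x) <-> forall i, Zlt (D i f) (Some x).
Proof. by rewrite tdeg_subdegree bigZmax_lt; split => [/allP h i | h]; [exact: h | apply/allP]. Qed.

Lemma tdeg_ds_le i f : Zle (D i f) (Dl f).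
Proof. by move: i; apply/tdeg_subdegree_le; exact: Zle_refl. Qed.

Lemma tdeg_nneg f : f != 0 -> Zle (Some 0) (Dl f).
Proof. by move=> f0; rewrite tdegE //; exact: delta_nneg. Qed.

Lemma tdeg_ds_coef_le i p n : in_Ad p -> Zle (D i p`_n) (Some n%:Z).
Proof. by move=> hp; exact: Zle_trans (tdeg_ds_le i _) (hp n). Qed.

Lemma dominant_elem i : exists f, f != 0 /\ forall j, j != i -> Zlt (D j f) (D i f).
Proof. by have [f [f0 h]] := ds_minimal i; exists f; split => // j /h; rewrite !tdegE. Qed.

Lemma tdeg_dominant i f : (forall j, j != i -> Zlt (D j f) (D i f)) -> Dl f = D i f.
Proof.
move=> h; apply: Zle_anti; last exact: tdeg_ds_le.
by apply/tdeg_subdegree_le => j; have [->|/h /Zlt_le] := eqVneq j i; rewrite ?Zle_refl.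
Qed.

Lemma tdeg_nneg_dominant i h : h != 0 -> (forall j, j != i -> Zlt (D j h) (Some 0)) ->
  Dl h = D i h /\ Zle (Some 0) (D i h).
Proof.
move=> h0 hneg; have hi : Zle (Some 0) (D i h).
  rewrite -[Zle _ _]negbK -ZltNge; apply/negP => hi.
  have : Zlt (Dl h) (Some 0) by apply/tdeg_subdegree_lt => j; have [->|/hneg] := eqVneq j i.
  by rewrite ZltNge tdeg_nneg.
by split => //; apply: tdeg_dominant => j /hneg /Zlt_le_trans; apply.
Qed.

Lemma dominant_power i f g : D i f = Some 0 -> (forall j, j != i -> Zlt (D j f) (Some 0)) ->
  exists m, D i (g * f ^+ m) = D i g /\ forall j, j != i -> Zlt (D j (g * f ^+ m)) (Some 0).
Proof.
move=> fi fj; pose c := if Dl g is Some x then `|x|%N else 0%N.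
have gc j : Zle (D j g) (Some c%:Z).
  by apply: Zle_trans (tdeg_ds_le j g) _; rewrite /c; case: (Dl g) => [x|] //=; lia.
exists c.+1; split.
  by rewrite tdeg_dsM (tdeg_exp A_idom _ (ds_semidegree i) fi) mul0rn Zadd0r.
move=> j /fj fjneg; rewrite tdeg_dsM.
have fj1 : Zle (D j f) (Some (-1)) by move: fjneg; rewrite ZltNge; case: (D j f) => [x|] //=; lia.
have := Zadd_le (gc j) (tdeg_exp_le A_idom c.+1 (ds_semidegree j) fj1).
by rewrite ZltNge; case: (Zadd _ _) => [x|] //=; rewrite mulNrn; lia.
Qed.

Lemma nonzero_ds_pos_elem i : ~ is_zero_fun (ds i) ->
  exists a (e : nat), [/\ (0 < e)%N, D i a = Some e%:Z & Zle (Dl a) (Some e%:Z)].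
Proof.
move=> nz_i; have [f [f0 fdom]] := dominant_elem i.
have fnneg : Zle (Some 0) (D i f) by rewrite -(tdeg_dominant fdom) tdeg_nneg.
case Efi: (D i f) fnneg => [[c|c]|] //= _.
have [c0|c_gt0] := posnP c; last by exists f, c; rewrite (tdeg_dominant fdom) Efi Zle_refl.
subst c.
have [g [g0 gi]] : exists g, g != 0 /\ D i g != Some 0.
  apply: NNPP => hg; apply: nz_i => g g0; apply/eqP; rewrite -tdegE //.
  by apply: contraT => gi; exfalso; apply: hg; exists g.
have fneg j : j != i -> Zlt (D j f) (Some 0) by move/fdom; rewrite Efi.
have [m [him hjm]] := dominant_power g Efi fneg.
have fm0 : f ^+ m != 0.
  by apply/eqP => /(congr1 (tdeg (ds i))); rewrite (tdeg_exp A_idom _ (ds_semidegree i) Efi) tdeg0.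
have [hdom hnneg] := tdeg_nneg_dominant (mul_neq0_dom A_idom g0 fm0) hjm.
rewrite him in hdom hnneg; case Egi: (D i g) gi hnneg hdom => [[e|e]|] //= gi _ hdom.
exists (g * f ^+ m), e; rewrite hdom him Egi Zle_refl; split => //.
by rewrite lt0n; apply: contra gi => /eqP ->.
Qed.

Definition comp_ideal i (p : {poly A}) : Prop :=
  in_Adelta delta p /\ forall n, Zlt (D i p`_n) (Some n%:Z).

Definition comp_locus i := Vset delta (comp_ideal i).

Lemma comp_ideal_X i : comp_ideal i 'X.
Proof.
split; first by apply/in_AdeltaP; exact: in_AdX.
by move=> n; rewrite coefX; case: eqP => [->|_]; rewrite ?tdeg0 // tdeg1 //; exact: ds_degree_like.
Qed.

Lemma last_saturated_coef i p : in_Ad p -> ~ comp_ideal i p ->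
  exists n, D i p`_n = Some n%:Z /\ forall k, (n < k)%N -> Zlt (D i p`_k) (Some k%:Z).
Proof.
move=> hp hn.
have [n /eqP hn'] : exists n, D i p`_n == Some n%:Z.
  apply: NNPP => hne; apply: hn; split; first by apply/in_AdeltaP.
  move=> n; rewrite /Zlt tdeg_ds_coef_le //=.
  by apply/negP => e; apply: hne; exists n.
have ub k : D i p`_k == Some k%:Z -> (k <= size p)%N.
  by case: (leqP (size p) k) => [hk|/ltnW //]; rewrite nth_default // tdeg0.
have [m /eqP hm hmax] := ex_maxnP (ex_intro _ n (introT eqP hn')) ub.
exists m; split => // k hk; rewrite /Zlt tdeg_ds_coef_le //=.
by apply/negP => /hmax; rewrite leqNgt hk.
Qed.

(* The product of the top saturated coefficients of [p] and [q] is saturated and strictly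
   dominates every other term of the corresponding coefficient of [p * q]. *)
Lemma saturated_coefM i p q n m : in_Ad p -> in_Ad q ->
  D i p`_n = Some n%:Z -> (forall k, (n < k)%N -> Zlt (D i p`_k) (Some k%:Z)) ->
  D i q`_m = Some m%:Z -> (forall k, (m < k)%N -> Zlt (D i q`_k) (Some k%:Z)) ->
  D i (p * q)`_(n + m) = Some (n + m)%:Z.
Proof.
move=> hp hq hn nmax hm mmax.
have top : (n < (n + m).+1)%N by rewrite ltnS leq_addr.
have Dtop : D i (p`_n * q`_(n + m - n)) = Some (n + m)%:Z.
  by rewrite tdeg_dsM addKn hn hm /= PoszD.
rewrite coefM (bigD1 (Ordinal top)) //= addrC (tdegD_dominant A_idom (ds_degree_like i)) ?Dtop //.
apply: (tdeg_sum_lt (ds_degree_like i)) => j hj; rewrite tdeg_dsM.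
have hjN : (j <= n + m)%N by rewrite -ltnS.
rewrite -[X in Some X%:Z](subnKC hjN) PoszD.
have /negPf hjn : nat_of_ord j != n by apply: contra hj => /eqP e; apply/eqP/val_inj.
case: (ltngtP j n) hjn => // hjn _.
  by apply: Zadd_ltr; [exact: tdeg_ds_coef_le | apply: mmax; lia].
by apply: Zadd_ltl; [exact: nmax | exact: tdeg_ds_coef_le].
Qed.

Lemma comp_ideal_prime i p q : in_Ad p -> in_Ad q ->
  comp_ideal i (p * q) -> comp_ideal i p \/ comp_ideal i q.
Proof.
move=> hp hq [_ hpq]; apply: NNPP => /not_or_and [np nq].
have [n [hn nmax]] := last_saturated_coef hp np.
have [m [hm mmax]] := last_saturated_coef hq nq.
by move: (hpq (n + m)%N); rewrite (saturated_coefM hp hq hn nmax hm mmax) Zlt_irr.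
Qed.

Lemma comp_ideal_point i : ~ is_zero_fun (ds i) -> is_Proj_point delta (comp_ideal i).
Proof.
move=> nz_i; split; split.
- by move=> p [].
- by split=> [|n]; rewrite ?coef0 ?tdeg0 //; apply/in_AdeltaP; exact: in_Ad0.
- move=> p q [/in_AdeltaP hp1 hp2] [/in_AdeltaP hq1 hq2]; split.
    by apply/in_AdeltaP; exact: in_AdD.
  move=> n; rewrite coefD; apply: Zle_lt_trans (tdegD_le (ds_degree_like i) _ _) _.
  by rewrite Zmax_lt hp2 hq2.
- move=> p q [/in_AdeltaP hp1 hp2] /in_AdeltaP hq; split.
    by apply/in_AdeltaP; exact: in_AdM.
  move=> n; rewrite coefM; apply: (tdeg_sum_lt (ds_degree_like i)) => j _.
  rewrite tdeg_dsM -[n in Some n%:Z](subnKC (ltnSE (ltn_ord j))) PoszD.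
  by apply: Zadd_ltr; [exact: tdeg_ds_coef_le | exact: hp2].
- by move=> [_ /(_ 0%N)]; rewrite coef1 /= tdeg1 ?Zlt_irr //; exact: ds_degree_like.
- by move=> p q /in_AdeltaP hp /in_AdeltaP hq; exact: comp_ideal_prime.
- move=> p [/in_AdeltaP hp hi] n; split.
    by apply/in_AdeltaP; apply: in_Ad_homog; exact: hp.
  by move=> m; rewrite coef_homog; case: eqP => [->|_]; rewrite ?tdeg0.
have [a [e [e_gt0 ai ad]]] := nonzero_ds_pos_elem nz_i.
exists (homog a e); split.
- by apply/in_AdeltaP; exact: in_Ad_homog.
- by rewrite coef_homog; case: eqP => // e0; rewrite -e0 in e_gt0.
- by move=> [_ /(_ e)]; rewrite coef_homog eqxx ai Zlt_irr.
Qed.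

(* For [ds i = 0], [comp_ideal i] is the whole irrelevant ideal, so [comp_locus i] is empty. *)
Lemma comp_locus_nonzero i P : comp_locus i P -> ~ is_zero_fun (ds i).
Proof.
move=> [[_ [_ _ [p [hp p0 nPp]]]] hsub] z_i; apply: nPp; apply: hsub; split => // -[|n].
  by rewrite p0 tdeg0.
have [->|pn] := eqVneq p`_n.+1 0; first by rewrite tdeg0.
by rewrite tdegE // z_i.
Qed.

Lemma comp_ideal_incl_eq k i : (forall p, comp_ideal k p -> comp_ideal i p) -> k = i.
Proof.
move=> hsub; apply: NNPP => ki.
have [f [f0 fdom]] := dominant_elem i.
have fnneg : Zle (Some 0) (D i f) by rewrite -(tdeg_dominant fdom) tdeg_nneg.
case Efi: (D i f) fnneg => [[e|e]|] //= _.
have /hsub [_ /(_ e)] : comp_ideal k (homog f e).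
  split; first by apply/in_AdeltaP; apply: in_Ad_homog; rewrite (tdeg_dominant fdom) Efi Zle_refl.
  move=> m; rewrite coef_homog; case: eqP => [->|_]; last by rewrite tdeg0.
  by rewrite -Efi; apply: fdom; apply/eqP.
by rewrite coef_homog eqxx Efi Zlt_irr.
Qed.

Lemma homog_in_Xinf_point P a n : X_infty delta P -> Zlt (Dl a) (Some n%:Z) -> P (homog a n).
Proof.
move=> [[[_ P0 _ Pideal _] _] PX] alt.
have [->|a0] := eqVneq a 0; first by rewrite /homog polyC0 mul0r.
case: n alt => [|n] alt; first by move: (Zle_lt_trans (tdeg_nneg a0) alt); rewrite Zlt_irr.
rewrite homogSX; apply: Pideal => //; apply/in_AdeltaP; apply: in_Ad_homog.
by move: alt; rewrite ZltNge; case: (Dl a) => [x|] //=; lia.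
Qed.

Lemma not_comp_locus_homog P k : is_Proj_point delta P -> ~ comp_locus k P ->
  exists n a, [/\ Zlt (D k a) (Some n%:Z), Zle (Dl a) (Some n%:Z) & ~ P (homog a n)].
Proof.
move=> HP nk; apply: NNPP => hne; apply: nk; split => // p [/in_AdeltaP pAd pk].
apply: (Proj_point_homog HP) => n; apply: NNPP => hn; apply: hne.
by exists n, p`_n.
Qed.

Lemma Xinf_sub_comp_locus P : X_infty delta P -> exists k, comp_locus k P.
Proof.
move=> PXinf; have [HP _] := PXinf; apply: NNPP => hne.
have /functional_choice [n hn] : forall k, exists n a,
    [/\ Zlt (D k a) (Some n%:Z), Zle (Dl a) (Some n%:Z) & ~ P (homog a n)].
  by move=> k; apply: not_comp_locus_homog => // hk; apply: hne; exists k.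
have [a ha] := functional_choice _ hn.
have : P (\prod_(k < N) homog (a k) (n k)).
  rewrite prod_homog; apply: homog_in_Xinf_point => //; apply/tdeg_subdegree_lt => j.
  rewrite [\sum_k _](bigD1 j) // [\prod_k _](bigD1 j) //= tdeg_dsM PoszD.
  apply: Zadd_ltl; first by case: (ha j).
  apply: (tdeg_prod_le A_idom (ds_degree_like j)) => k _.
  by case: (ha k) => _ hk _; exact: Zle_trans (tdeg_ds_le j _) hk.
case/(Proj_point_prod A_idom delta_degree_like HP) => [k|k]; last by case: (ha k).
by apply: in_Ad_homog; case: (ha k).
Qed.

Lemma irreducible_sub_comp_locus Z : irreducible_in_Xinf delta Z ->
  exists k, forall P, Z P -> comp_locus k P.
Proof.
move=> Zirr; apply: (irreducible_sub_bigcup A_idom delta_degree_like (s := enum 'I_N) Zirr).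
  by move=> k; apply: Proj_closed_Vset => p [/in_AdeltaP].
case: Zirr => ZXinf _ _ P /ZXinf /Xinf_sub_comp_locus [k hk].
by exists k; rewrite ?mem_enum.
Qed.

Lemma comp_locus_irreducible i : ~ is_zero_fun (ds i) -> irreducible_in_Xinf delta (comp_locus i).
Proof.
by move=> nz_i; apply: Vset_point_irreducible; [exact: comp_ideal_point | exact: comp_ideal_X].
Qed.

Lemma comp_locus_generic i : ~ is_zero_fun (ds i) -> comp_locus i (comp_ideal i).
Proof. by move=> nz_i; split => //; exact: comp_ideal_point. Qed.

Lemma comp_locus_component i :
  ~ is_zero_fun (ds i) -> irreducible_component_Xinf delta (comp_locus i).
Proof.
move=> nz_i; split; first exact: comp_locus_irreducible.
move=> Z Zirr iZ; have [k kZ] := irreducible_sub_comp_locus Zirr.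
have [_ /comp_ideal_incl_eq ki] := kZ _ (iZ _ (comp_locus_generic nz_i)).
by rewrite -ki.
Qed.

Lemma component_comp_locus Z : irreducible_component_Xinf delta Z ->
  exists2 k, ~ is_zero_fun (ds k) & forall P, Z P <-> comp_locus k P.
Proof.
move=> [Zirr Zmax]; have [k kZ] := irreducible_sub_comp_locus Zirr.
have nz_k : ~ is_zero_fun (ds k).
  by case: Zirr => _ [P /kZ /comp_locus_nonzero].
by exists k => // P; split; [exact: kZ | exact: Zmax (comp_locus_irreducible nz_k) kZ P].
Qed.

Lemma comp_locus_inj i j : ~ is_zero_fun (ds i) ->
  (forall P, comp_locus i P <-> comp_locus j P) -> i = j.
Proof.
move=> nz_i eqij; have [_ hj] := (eqij _).1 (comp_locus_generic nz_i).
exact/esym/comp_ideal_incl_eq.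
Qed.

Lemma Xinf_has_components_enum M (g : 'I_M -> 'I_N) : injective g ->
  (forall m, ~ is_zero_fun (ds (g m))) ->
  (forall k, ~ is_zero_fun (ds k) -> exists m, g m = k) -> Xinf_has_n_components delta M.
Proof.
move=> g_inj g_nz g_onto; exists (fun m => comp_locus (g m)); split.
- by move=> m; exact: comp_locus_component.
- by move=> m m' eqm; apply/g_inj/comp_locus_inj.
move=> Z /component_comp_locus [k /g_onto [m <-] hk]; by exists m.
Qed.

Lemma zero_ds_unique i j : is_zero_fun (ds i) -> is_zero_fun (ds j) -> i = j.
Proof.
move=> z_i z_j; apply: NNPP => /eqP ji.
have [f [f0 /(_ j)]] := dominant_elem i.
by rewrite eq_sym => /(_ ji); rewrite !tdegE // z_i // z_j // Zlt_irr.
Qed.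

End Subdegree.

Theorem corollary4p4 (K : closedFieldType) (A : comAlgType K)
  (A_idom : forall f g : A, f * g = 0 -> (f == 0) || (g == 0))
  (delta : A -> Zinf) (N : nat) (ds : 'I_N -> A -> Zinf)
  (Hdl : degree_like delta)
  (Hnn : nonneg_fun delta)
  (Hpres : subdegree_presentation delta ds)
  (Hmin : minimal_presentation ds) :
  ((forall i, ~ is_zero_fun (ds i)) -> Xinf_has_n_components delta N) /\
  ((exists i, is_zero_fun (ds i)) -> Xinf_has_n_components delta N.-1).
Proof.
split=> [nz | [i0 z_i0]].
  by apply: (Xinf_has_components_enum A_idom Hdl Hnn Hpres Hmin (g := id)) => // k _; exists k.
move: ds Hpres Hmin i0 z_i0; case: N => [|n] ds Hpres Hmin i0 z_i0; first by case: i0 z_i0.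
apply: (Xinf_has_components_enum A_idom Hdl Hnn Hpres Hmin (g := lift i0)).
- exact: lift_inj.
- by move=> m z_m; have := zero_ds_unique Hmin z_i0 z_m; apply/eqP; rewrite neq_lift.
- move=> k nz_k; have [m ->|k_i0] := unliftP i0 k; first by exists m.
  by case: nz_k; rewrite k_i0.
Qed.
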